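(* Let $n$ be a nonnegative integer and let $a,b,c\in\mathbb{C}$ be such that all hypergeometric series and quotients below are defined (no lower parameter is zero or a negative integer). Then \[ {}_4F_3\!\left(\left.{-n,\frac{a}{2},\frac{a+1}{2},b \atop a,1+a-c,c}\right| 4\right) =\frac{(-1)^n(b)_n}{(1+a-c)_n}\, {}_4F_3\!\left(\left.{-n,\frac{c-b-n}{2},\frac{c-b-n+1}{2},c-a-n \atop c-b-n,1-b-n,c}\right| 4\right). \]
   Context: For $a\in\mathbb{C}$, $(a)_0=1$ and $(a)_k=a(a+1)\cdots(a+k-1)$ for $k\ge1$. The hypergeometric series is ${}_rF_s\!\left(\left.{\alpha_1,\ldots,\alpha_r\atop \beta_1,\ldots,\beta_s}\right|z\right)=\sum_{k\ge0}\frac{(\alpha_1)_k\cdots(\alpha_r)_k}{k!(\beta_1)_k\cdots(\beta_s)_k}z^k$, with no lower parameter zero or a negative integer; when an upper parameter is $-n$ ($n$ a nonnegative integer) it is a finite sum over $0\le k\le n$. *)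

From HB Require Import structures.
From mathcomp Require Import all_boot all_order all_algebra.
From mathcomp Require Import complex.
From mathcomp Require Import reals.
Set Implicit Arguments. Unset Strict Implicit. Unset Printing Implicit Defensive.
Import Order.TTheory GRing.Theory Num.Theory.
Local Open Scope ring_scope.

Definition poch {F : comNzRingType} (a : F) (k : nat) : F :=
  \prod_(i < k) (a + i%:R).

(* Terms with k > n vanish since (-n)_k = 0, so this is the full series. *)
Definition hypF_term {F : fieldType} (n : nat) (us ls : seq F) (z : F) (k : nat) : F :=
  poch (- (n%:R)) k * \prod_(u <- us) poch u k
  / (k`!%:R * \prod_(l <- ls) poch l k) * z ^+ k.

Definition hypF {F : fieldType} (n : nat) (us ls : seq F) (z : F) : F :=
  \sum_(k < n.+1) hypF_term n us ls z k.

Definition lower_ok {F : fieldType} (b : F) : Prop := forall m : nat, b <> - (m%:R).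

(* The duplication formula (x/2)_k ((x+1)/2)_k 4^k = (x)_(2k) cancels the lower
   parameter x against the pair of upper parameters x/2, (x+1)/2 on both sides.
   On the left, (a+k)_k / (1+a-c)_k is then expanded by the Chu-Vandermonde
   identity; after exchanging the two sums, the inner sum over k is again a
   Chu-Vandermonde sum, which leaves the single sum over j of [common_term].
   On the right, the reflection (-1)^k (y)_k = (1-y-k)_k turns the k-th term,
   multiplied by the prefactor, into the (n-k)-th term of that same sum. *)

From HB Require Import structures.
From mathcomp Require Import all_boot all_order all_algebra.
From mathcomp Require Import ring.
From mathcomp Require Import complex.
From mathcomp Require Import reals.
Import Order.TTheory GRing.Theory Num.Theory.
Local Open Scope ring_scope.

Lemma ffactnD n j m : (n ^_ (j + m) = n ^_ j * (n - j) ^_ m)%N.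
Proof.
elim: m => [|m IHm]; first by rewrite addn0 ffactn0 muln1.
by rewrite addnS !ffactnSr IHm subnDA mulnA.
Qed.

Lemma mul_bin_sub n j m :
  ('C(n, j + m) * 'C(j + m, j) = 'C(n, j) * 'C(n - j, m))%N.
Proof.
apply/eqP; rewrite -(@eqn_pmul2r (j`! * m`!)) ?muln_gt0 ?fact_gt0 //.
have /bin_fact : (j <= j + m)%N by exact: leq_addr.
rewrite addKn => Ejm.
rewrite -mulnA Ejm bin_ffact ffactnD -!bin_ffact.
by apply/eqP; rewrite mulnACA.
Qed.

Lemma sum_nat_widen {V : nmodType} {k n} (f : nat -> V) : (k <= n)%N ->
  (forall j, (k < j)%N -> f j = 0) ->
  \sum_(0 <= j < k.+1) f j = \sum_(0 <= j < n.+1) f j.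
Proof.
move=> le_kn f0; rewrite (@big_nat_widen _ _ _ 0 k.+1 n.+1) // big_mkcond.
by apply: eq_bigr => j _; case: ltnP => // /f0.
Qed.

Section PochhammerRing.
Variable F : comNzRingType.
Implicit Types (x y B C : F) (k m N : nat).

Lemma poch0 x : poch x 0 = 1.
Proof. by rewrite /poch big_ord0. Qed.

Lemma pochS x k : poch x k.+1 = poch x k * (x + k%:R).
Proof. by rewrite /poch big_ord_recr. Qed.

Lemma pochSl x k : poch x k.+1 = x * poch (x + 1) k.
Proof.
rewrite /poch big_ord_recl addr0; congr (_ * _); apply: eq_bigr => i _.
by rewrite lift0 -natr1; ring.
Qed.

Lemma pochD x k m : poch x (k + m) = poch x k * poch (x + k%:R) m.
Proof.
elim: m => [|m IHm]; first by rewrite addn0 poch0 mulr1.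
by rewrite addnS !pochS IHm natrD; ring.
Qed.

Lemma poch_reflect y k : (-1) ^+ k * poch y k = poch (1 - y - k%:R) k.
Proof.
elim: k => [|k IHk]; first by rewrite !poch0 mulr1.
rewrite pochS pochSl exprS -natr1.
have -> : 1 - y - (k%:R + 1) + 1 = 1 - y - k%:R by ring.
by rewrite -IHk; ring.
Qed.

Lemma poch_oppn_ffact N k : poch (- N%:R : F) k = (-1) ^+ k * (N ^_ k)%:R.
Proof.
elim: k => [|k IHk]; first by rewrite poch0 ffactn0 mulr1.
rewrite pochS IHk ffactnSr natrM exprS.
have [le_kN | lt_Nk] := leqP k N; first by rewrite natrB //; ring.
by rewrite ffact_small // !(mul0r, mulr0).
Qed.

Lemma poch_oppn N k : poch (- N%:R : F) k = (-1) ^+ k * k`!%:R * 'C(N, k)%:R.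
Proof. by rewrite poch_oppn_ffact -bin_ffact natrM; ring. Qed.

Lemma chu_vandermonde N B C :
  \sum_(m < N.+1) 'C(N, m)%:R * (-1) ^+ m * poch B m * poch (C + m%:R) (N - m)
  = poch (C - B) N.
Proof.
elim: N B C => [|N IHN] B C; first by rewrite big_ord1 !poch0 bin0 !mulr1.
(* Pascal's rule 'C(N.+1, m) = 'C(N, m) + 'C(N, m.-1) splits the sum in two. *)
have pascal_left : \sum_(m < N.+2)
    'C(N, m)%:R * (-1) ^+ m * poch B m * poch (C + m%:R) (N.+1 - m)
    = (C + N%:R) * poch (C - B) N.
  rewrite -IHN big_ord_recr /= bin_small // !mul0r addr0 mulr_sumr.
  apply: eq_bigr => -[m /=]; rewrite ltnS => le_mN _.
  by rewrite subSn // pochS natrB //; ring.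
have pascal_right : \sum_(m < N.+1)
    'C(N, m)%:R * (-1) ^+ m.+1 * poch B m.+1 * poch (C + m.+1%:R) (N.+1 - m.+1)
    = - B * poch (C - B) N.
  rewrite (_ : C - B = C + 1 - (B + 1)); last by ring.
  rewrite -IHN mulr_sumr; apply: eq_bigr => m _.
  by rewrite subSS pochSl exprS -natr1 addrA [C + 1 + _]addrAC; ring.
transitivity ((C + N%:R) * poch (C - B) N + - B * poch (C - B) N).
  rewrite -pascal_left -pascal_right [in RHS]big_ord_recl -addrA -big_split /=.
  rewrite big_ord_recl /= !bin0; congr (_ + _); apply: eq_bigr => m _.
  by rewrite /bump /= binS natrD; ring.
by rewrite pochS; ring.
Qed.

End PochhammerRing.

Lemma poch_neq0 {F : fieldType} {x : F} k : lower_ok x -> poch x k != 0.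
Proof.
move=> x_ok; elim: k => [|k IHk]; first by rewrite poch0 oner_neq0.
by rewrite pochS mulf_neq0 // addr_eq0; apply/eqP.
Qed.

Lemma lower_okD (F : fieldType) (x : F) j : lower_ok x -> lower_ok (x + j%:R).
Proof. by move=> x_ok m /eqP; rewrite -subr_eq0 opprK -addrA -natrD addr_eq0 => /eqP /x_ok. Qed.

Lemma chu_vandermonde_div (F : fieldType) N (B C : F) : lower_ok C ->
  \sum_(m < N.+1) 'C(N, m)%:R * (-1) ^+ m * poch B m / poch C m
  = poch (C - B) N / poch C N.
Proof.
move=> C_ok; rewrite -chu_vandermonde mulr_suml.
apply: eq_bigr => -[m /=]; rewrite ltnS => le_mN _.
have splitC : poch C N = poch C m * poch (C + m%:R) (N - m) by rewrite -pochD subnKC.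
by rewrite splitC; field; rewrite !poch_neq0 //; exact: lower_okD.
Qed.

Lemma poch_duplication (F : fieldType) (x : F) k : 2 != 0 :> F ->
  poch (x / 2) k * poch ((x + 1) / 2) k * 4 ^+ k = poch x (k + k).
Proof.
move=> two_nz; elim: k => [|k IHk]; first by rewrite !poch0 !mulr1.
by rewrite addnS addSn !pochS -IHk exprS -addn1 !natrD; field.
Qed.

Lemma poch_ratio_sum (F : fieldType) (a c : F) k : lower_ok (1 + a - c) ->
  poch (a + k%:R) k / poch (1 + a - c) k
  = \sum_(0 <= j < k.+1) 'C(k, j)%:R * poch (c + (k - j)%:R) j / poch (1 + a - c) j.
Proof.
move=> A_ok; rewrite (_ : a + k%:R = 1 + a - c - (1 - c - k%:R)); last by ring.
rewrite -chu_vandermonde_div // big_mkord.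
apply: eq_bigr => -[j /=]; rewrite ltnS => le_jk _.
rewrite -[_ * (-1) ^+ j * _]mulrA poch_reflect.
by congr (_ * poch _ _ / _); rewrite natrB //; ring.
Qed.

Section HypergeometricTerms.
Variable F : numFieldType.
Implicit Types (a b c x u l d : F) (n k j : nat).

Lemma hypF_term_duplication n x u l d k :
  lower_ok x -> lower_ok l -> lower_ok d ->
  hypF_term n [:: x / 2; (x + 1) / 2; u] [:: x; l; d] 4 k
  = (-1) ^+ k * 'C(n, k)%:R * poch u k * poch (x + k%:R) k / (poch l k * poch d k).
Proof.
move=> x_ok l_ok d_ok.
have nz_fact : k`!%:R != 0 :> F by rewrite pnatr_eq0 -lt0n fact_gt0.
rewrite /hypF_term !big_cons !big_nil !mulr1 poch_oppn.
transitivity ((-1) ^+ k * k`!%:R * 'C(n, k)%:R *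
   (poch (x / 2) k * poch ((x + 1) / 2) k * 4 ^+ k) * poch u k /
   (k`!%:R * (poch x k * (poch l k * poch d k)))); first by ring.
rewrite poch_duplication ?pnatr_eq0 // pochD.
by field; rewrite nz_fact !poch_neq0.
Qed.

Definition lhs_summand n a b c k j : F :=
  (-1) ^+ k * 'C(n, k)%:R * 'C(k, j)%:R * poch b k / (poch (1 + a - c) j * poch c (k - j)).

Definition common_term n a b c j : F :=
  (-1) ^+ j * 'C(n, j)%:R * poch b j * poch (c - b - j%:R) (n - j)
  / (poch (1 + a - c) j * poch c (n - j)).

Lemma hypF_lhs_term_expand n a b c k :
  lower_ok a -> lower_ok (1 + a - c) -> lower_ok c -> (k <= n)%N ->
  hypF_term n [:: a / 2; (a + 1) / 2; b] [:: a; 1 + a - c; c] 4 k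
  = \sum_(0 <= j < n.+1) lhs_summand n a b c k j.
Proof.
move=> a_ok A_ok c_ok le_kn; rewrite hypF_term_duplication //.
transitivity ((-1) ^+ k * 'C(n, k)%:R * poch b k / poch c k *
              (poch (a + k%:R) k / poch (1 + a - c) k)).
  by field; rewrite !poch_neq0.
rewrite poch_ratio_sum // big_distrr -(sum_nat_widen _ le_kn) => [|j lt_kj]; last first.
  by rewrite /lhs_summand (bin_small lt_kj) mulr0n; ring.
apply: eq_big_nat => j /andP[_]; rewrite ltnS => le_jk.
have splitc : poch c k = poch c (k - j) * poch (c + (k - j)%:R) j by rewrite -pochD subnK.
by rewrite /= /lhs_summand splitc; field; rewrite !poch_neq0 //; exact: lower_okD.
Qed.

Lemma lhs_column_sum n a b c j :
  lower_ok (1 + a - c) -> lower_ok c -> (j <= n)%N ->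
  \sum_(0 <= k < n.+1) lhs_summand n a b c k j = common_term n a b c j.
Proof.
move=> A_ok c_ok le_jn.
rewrite (@big_cat_nat _ _ _ j 0 n.+1 _ _ (leq0n j) (leqW le_jn)) /=.
rewrite [X in X + _]big1_seq ?add0r; last first.
  move=> k; rewrite mem_index_iota => /andP[_ lt_kj].
  by rewrite /lhs_summand (bin_small lt_kj) mulr0n; ring.
rewrite -{1}(add0n j) big_addn subSn //.
transitivity ((-1) ^+ j * 'C(n, j)%:R * poch b j / poch (1 + a - c) j *
  \sum_(0 <= m < (n - j).+1)
     'C(n - j, m)%:R * (-1) ^+ m * poch (b + j%:R) m / poch c m).
  rewrite big_distrr; apply: eq_bigr => m _ /=.
  rewrite /lhs_summand addnK [(m + j)%N]addnC pochD exprD.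
  have binE : 'C(n, j + m)%:R * 'C(j + m, j)%:R = 'C(n, j)%:R * 'C(n - j, m)%:R :> F.
    by rewrite -!natrM mul_bin_sub.
  transitivity ((-1) ^+ j * (-1) ^+ m * ('C(n, j + m)%:R * 'C(j + m, j)%:R) *
    (poch b j * poch (b + j%:R) m) / (poch (1 + a - c) j * poch c m)); first by ring.
  by rewrite binE; field; rewrite !poch_neq0.
rewrite big_mkord chu_vandermonde_div // /common_term.
rewrite (_ : c - (b + j%:R) = c - b - j%:R); last by ring.
by field; rewrite !poch_neq0.
Qed.

Lemma hypF_lhs_sum n a b c :
  lower_ok a -> lower_ok (1 + a - c) -> lower_ok c ->
  hypF n [:: a / 2; (a + 1) / 2; b] [:: a; 1 + a - c; c] 4
  = \sum_(0 <= j < n.+1) common_term n a b c j.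
Proof.
move=> a_ok A_ok c_ok; rewrite /hypF -(big_mkord xpredT).
transitivity (\sum_(0 <= k < n.+1) \sum_(0 <= j < n.+1) lhs_summand n a b c k j).
  by apply: eq_big_nat => k /andP[_]; rewrite ltnS; exact: hypF_lhs_term_expand.
rewrite exchange_big_nat; apply: eq_big_nat => j /andP[_]; rewrite ltnS => le_jn.
exact: lhs_column_sum.
Qed.

Lemma hypF_rhs_term n a b c k :
  lower_ok (1 + a - c) -> lower_ok c -> lower_ok (c - b - n%:R) ->
  lower_ok (1 - b - n%:R) -> (k <= n)%N ->
  (-1) ^+ n * poch b n / poch (1 + a - c) n *
  hypF_term n [:: (c - b - n%:R) / 2; (c - b - n%:R + 1) / 2; c - a - n%:R]
              [:: c - b - n%:R; 1 - b - n%:R; c] 4 k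
  = common_term n a b c (n - k).
Proof.
move=> A_ok c_ok x_ok bn_ok le_kn; rewrite hypF_term_duplication //.
move: (n - k)%N (subnK le_kn) x_ok bn_ok => j <- x_ok bn_ok.
have binC : 'C(j + k, k) = 'C(j + k, j) by rewrite -{2}(addKn j k) bin_sub ?leq_addr.
have shiftx : c - b - (j + k)%:R + k%:R = c - b - j%:R by rewrite natrD; ring.
have reflb : poch (1 - b - (j + k)%:R) k = (-1) ^+ k * poch (b + j%:R) k.
  by rewrite poch_reflect natrD; congr poch; ring.
have reflA : poch (c - a - (j + k)%:R) k = (-1) ^+ k * poch (1 + a - c + j%:R) k.
  by rewrite poch_reflect natrD; congr poch; ring.
have nz_bj : poch (b + j%:R) k != 0.
  by move: (poch_neq0 k bn_ok); rewrite reflb mulf_eq0 => /norP[].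
rewrite /common_term addKn binC shiftx reflb reflA !pochD exprD.
(* [field] does not know ((-1) ^+ k) ^+ 2 = 1, hence the parity split. *)
by rewrite -(signr_odd _ k); case: (odd k); rewrite ?expr0 ?expr1;
  field; rewrite nz_bj !poch_neq0 //; exact: lower_okD.
Qed.

End HypergeometricTerms.

Local Open Scope complex_scope.

Theorem proposition3p3 (R : realType) (n : nat) (a b c : R[i])
  (ha : lower_ok a) (hac : lower_ok (1 + a - c)) (hc : lower_ok c)
  (hcbn : lower_ok (c - b - n%:R)) (hbn : lower_ok (1 - b - n%:R)) :
  hypF n [:: a / 2; (a + 1) / 2; b] [:: a; 1 + a - c; c] 4
  = (-1) ^+ n * poch b n / poch (1 + a - c) n *
    hypF n [:: (c - b - n%:R) / 2; (c - b - n%:R + 1) / 2; c - a - n%:R]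
           [:: c - b - n%:R; 1 - b - n%:R; c] 4.
Proof.
rewrite hypF_lhs_sum // big_nat_rev /hypF -(big_mkord xpredT) mulr_sumr.
apply: eq_big_nat => k /andP[_ lt_kn].
by rewrite hypF_rhs_term // add0n subSS.
Qed.
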